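(* Let $h$ be a binary function symbol interpreted as associative and idempotent, let $a,b$ be distinct free constants, and let $x$ be a variable. Let $\mathcal{W}(x,\{a,b\})$ be the set of terms of the form $h(x,s_1,\ldots,s_n,x)$ with $n\ge 0$ and each $s_i\in\{x,a,b\}$. Then every $t\in\mathcal{W}(x,\{a,b\})$ is an $AI$-generalization of $h(a,b)$ and $h(b,a)$, i.e. $\mathcal{W}(x,\{a,b\})\subseteq \mathcal{G}_{AI}(h(a,b),h(b,a))$.
   Context: Terms are built from a countable set of variables and a set of function symbols with fixed arities; substitutions map variables to terms, are the identity on all but finitely many variables, and are extended homomorphically to terms (written postfix, $t\sigma$). $AI$ denotes the equational theory generated by $h(x,h(y,z)) = h(h(x,y),z)$ and $h(x,x)=x$ (all other symbols free), and $s\approx_{AI} t$ means $s=t$ holds in every model of these axioms. Because $h$ is associative, $h(u_1,\ldots,u_m)$ for $m\ge2$ denotes the flattened $h$-product of $u_1,\ldots,u_m$. A term $r$ is an $AI$-generalization of terms $s$ and $t$ if there exist substitutions $\sigma,\tau$ with $r\sigma\approx_{AI} s$ and $r\tau\approx_{AI} t$; $\mathcal{G}_{AI}(s,t)$ is the set of all such $r$. *)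

From Stdlib Require List.
From mathcomp Require Import all_boot.
Set Implicit Arguments.
Unset Strict Implicit.
Unset Printing Implicit Defensive.

Section Terms.
Variables (F : Type) (ar : F -> nat).

Unset Implicit Arguments.
Inductive term : Type :=
| Var : nat -> term
| App : forall f : F, ('I_(ar f) -> term) -> term.
Set Implicit Arguments.

Fixpoint subst (sigma : nat -> term) (t : term) : term :=
  match t with
  | Var n => sigma n
  | App f args => App f (fun i => subst sigma (args i))
  end.

Definition finite_subst (sigma : nat -> term) : Prop :=
  exists N : nat, forall n, N <= n -> sigma n = Var n.

Fixpoint eval (M : Type) (I : forall f : F, ('I_(ar f) -> M) -> M)
         (v : nat -> M) (t : term) : M :=
  match t with
  | Var n => v n
  | App f args => I f (fun i => eval I v (args i))
  end.

Variable h : F.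

Definition happ (M : Type) (I : forall f : F, ('I_(ar f) -> M) -> M) (x y : M) : M :=
  I h (fun i => if nat_of_ord i == 0 then x else y).

Definition hterm (u v : term) : term :=
  App h (fun i => if nat_of_ord i == 0 then u else v).

(* Flattened h-product h(u0,u1,...,um) (left-nested; equivalent to any
   bracketing modulo associativity). *)
Definition hprod (u0 : term) (us : seq term) : term := foldl hterm u0 us.

Definition AI_model (M : Type) (I : forall f : F, ('I_(ar f) -> M) -> M) : Prop :=
  (forall x y z : M, happ I x (happ I y z) = happ I (happ I x y) z) /\
  (forall x : M, happ I x x = x).

Definition AI_eq (s t : term) : Prop :=
  forall (M : Type) (I : forall f : F, ('I_(ar f) -> M) -> M),
    AI_model I -> forall v : nat -> M, eval I v s = eval I v t.

Definition AI_gen (r s t : term) : Prop :=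
  exists sigma tau : nat -> term,
    finite_subst sigma /\ finite_subst tau /\
    AI_eq (subst sigma r) s /\ AI_eq (subst tau r) t.

(* Constant: a symbol of arity 0 applied to no arguments (the argument
   function is irrelevant when ar c = 0; we use a dummy). *)
Definition const (c : F) : term := App c (fun _ => Var 0).

Definition W (x : nat) (a b : F) (t : term) : Prop :=
  exists s : seq term,
    (forall u, List.In u s -> u = Var x \/ u = const a \/ u = const b) /\
    t = hprod (Var x) (s ++ [:: Var x]).

End Terms.
Arguments App {F ar} f _.

(* Send x to h(a,b).  In an AI-model, i.e. a band, the image of a term of W
   evaluates to a product e s_1 ... s_n e with e = ab and each s_i in
   {e, a, b}.  The partial products e s_1 ... s_k stay in {e, ea}, since
   e e = e b = (ea) b = (ea) e = e and (ea) a = ea, and either of them times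
   e is e.  As W is symmetric in a and b, x |-> h(b,a) likewise sends the
   term to h(b,a). *)
From Stdlib Require Import FunctionalExtensionality.
From Stdlib Require List.
From mathcomp Require Import all_boot.

Set Implicit Arguments.
Unset Strict Implicit.
Unset Printing Implicit Defensive.

Section Band.
Variables (M : Type) (m : M -> M -> M).
Hypothesis mA : forall x y z, m x (m y z) = m (m x y) z.
Hypothesis mm : forall x, m x x = x.
Variables p q : M.
Let e := m p q.

Lemma band_foldl_prefix (l : seq M) v :
  (forall y, List.In y l -> y = e \/ y = p \/ y = q) ->
  v = e \/ v = m e p -> foldl m v l = e \/ foldl m v l = m e p.
Proof.
have e_q : m e q = e by rewrite /e -mA mm.
have ep_p : m (m e p) p = m e p by rewrite -mA mm.
have ep_q : m (m e p) q = e by rewrite -mA mm.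
have ep_e : m (m e p) e = e by rewrite /e -mA [m p (m p q)]mA !mm.
elim: l v => [|y l IHl] v /= l_e v_e; first by [].
apply: IHl => [z z_l|]; first by apply: l_e; right.
by case: v_e (l_e y (or_introl erefl)) => -> [->|[->|->]];
  rewrite ?mm ?e_q ?ep_p ?ep_q ?ep_e; tauto.
Qed.

Lemma band_foldl_sandwich (l : seq M) :
  (forall y, List.In y l -> y = e \/ y = p \/ y = q) ->
  foldl m e (l ++ [:: e]) = e.
Proof.
move=> l_e; rewrite foldl_cat /=.
have [->|->] := band_foldl_prefix l_e (or_introl erefl); first exact: mm.
by rewrite -mA /e [m p (m p q)]mA !mm.
Qed.

End Band.

Section Terms.
Variables (F : Type) (ar : F -> nat) (h : F).
Local Notation term := (@term F ar).
Local Notation Var := (Var F ar).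

Lemma subst_hterm (s : nat -> term) u w :
  subst s (hterm h u w) = hterm h (subst s u) (subst s w).
Proof. by congr App; apply: functional_extensionality => i; case: (_ == 0). Qed.

Lemma subst_hprod (s : nat -> term) u0 us :
  subst s (hprod h u0 us) = hprod h (subst s u0) (map (subst s) us).
Proof. by elim: us u0 => [|u us IHus] u0 //=; rewrite IHus subst_hterm. Qed.

Lemma subst_const (s : nat -> term) c : ar c = 0 -> subst s (const ar c) = const ar c.
Proof. by move=> c0; congr App; apply: functional_extensionality => -[i]; rewrite c0. Qed.

Section Eval.
Variables (M : Type) (I : forall f : F, ('I_(ar f) -> M) -> M) (v : nat -> M).

Lemma eval_hterm u w : eval I v (hterm h u w) = happ h I (eval I v u) (eval I v w).
Proof. by congr I; apply: functional_extensionality => i; case: (_ == 0). Qed.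

Lemma eval_hprod u0 us :
  eval I v (hprod h u0 us) = foldl (happ h I) (eval I v u0) (map (eval I v) us).
Proof. by elim: us u0 => [|u us IHus] u0 //=; rewrite IHus eval_hterm. Qed.

End Eval.

Definition subst1 (x : nat) (u : term) : nat -> term :=
  fun n => if n == x then u else Var n.

Lemma finite_subst1 x u : finite_subst (subst1 x u).
Proof.
exists x.+1 => n lt_x_n; rewrite /subst1.
by case: eqP lt_x_n => [->|//]; rewrite ltnn.
Qed.

Lemma W_sym x a b (t : term) : W h x a b t -> W h x b a t.
Proof. by case=> s [s_xab ->]; exists s; split=> // u /s_xab; tauto. Qed.

Lemma W_subst1_AI_eq x a b (t : term) : ar a = 0 -> ar b = 0 -> W h x a b t ->
  AI_eq h (subst (subst1 x (hterm h (const ar a) (const ar b))) t)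
          (hterm h (const ar a) (const ar b)).
Proof.
move=> a0 b0 [s [s_xab ->]] M I [hA hh] v.
set e := hterm h _ _.
have x_e : subst (subst1 x e) (Var x) = e by rewrite /= /subst1 eqxx.
rewrite subst_hprod cats1 map_rcons x_e eval_hprod map_rcons -cats1 /e !eval_hterm.
apply: band_foldl_sandwich => // y /List.in_map_iff [_ [<- /List.in_map_iff [u [<- u_s]]]].
rewrite -eval_hterm.
by case: (s_xab u u_s) => [->|[->|->]]; rewrite ?x_e ?subst_const //; tauto.
Qed.

End Terms.

Theorem corollary1 (F : Type) (ar : F -> nat) (h a b : F)
  (Hh : ar h = 2) (Ha : ar a = 0) (Hb : ar b = 0) (Hab : a <> b)
  (x : nat) (t : @term F ar) :
  W h x a b t ->
  AI_gen h t (hterm h (const ar a) (const ar b)) (hterm h (const ar b) (const ar a)).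
Proof.
move=> t_W.
exists (subst1 x (hterm h (const ar a) (const ar b))).
exists (subst1 x (hterm h (const ar b) (const ar a))).
split; first exact: finite_subst1.
split; first exact: finite_subst1.
split; first exact: W_subst1_AI_eq.
exact: W_subst1_AI_eq (W_sym t_W).
Qed.
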